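(* Let $\varphi=\frac{1+\sqrt5}{2}$, $\theta_0=\left(\frac12,\frac1\varphi,\frac1{\varphi^2}\right)$ and $m=(0,\frac12,\frac12)$. Then the language $\mathcal L'_m$ has complexity function $2n+1$ for all $n\ge0$, and the language $\mathcal L_m=\mathcal L_{m,\theta_0}$ has complexity function $2n+3$ for all $n\ge 2$.
   Context: $f_{\theta_0}(m)\in\{a,b,c\}^{\mathbb N}$ records, in order, the successive intersections of the half line $m+\mathbb R_+\theta_0$ with the planes $X=n$ (letter $a$), $Y=n$ (letter $b$), $Z=n$ (letter $c$), $n\in\mathbb Z$; $\mathcal L_m$ is its set of finite factors. The complexity function of a language counts its words of length $n$. The face $X=0$ is identified with $(\mathbb R/\mathbb Z)^2$ via $(y,z)$ and partitioned, up to boundaries, into seven sets, for $(y,z)\in[0,1)^2$: $P_{a_7}$: $y<4-2\varphi,\ z<2\varphi-3$; $P_{a_4}$: $y>4-2\varphi,\ z<2\varphi-3$; $P_{a_2}$: $y<4-2\varphi,\ 2\varphi-3<z<(2-\varphi)+y/\varphi$; $P_{a_1}$: $y<4-2\varphi,\ z>(2-\varphi)+y/\varphi$; $P_{a_5}$: $y>4-2\varphi,\ 2\varphi-3<z<(3-2\varphi)+y/\varphi$; $P_{a_3}$: $y>4-2\varphi,\ (3-2\varphi)+y/\varphi<z<(2-\varphi)+y/\varphi$; $P_{a_6}$: $y>4-2\varphi,\ z>(2-\varphi)+y/\varphi$. $v=v_0v_1v_2\cdots\in\{a_1,\dots,a_7\}^{\mathbb N}$ is defined by $v_k=a_i$ iff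 $m+\frac{2k}{\varphi}(1,-1)\bmod 1\in P_{a_i}$ (the coding of the translation $s\mapsto s+\frac2\varphi\bmod 1$ on the circle through $m$ in direction $(1,-1)$ by the pieces it crosses); one has $f_{\theta_0}(m)=\Phi(v)$ where $\Phi$ is the morphism $\Phi(a_1)=acb$, $\Phi(a_2)=abc$, $\Phi(a_3)=abcb$, $\Phi(a_4)=abb$, $\Phi(a_5)=abbc$, $\Phi(a_6)=acbb$, $\Phi(a_7)=ab$. $\mathcal L'_m$ is the set of finite factors of $v$. *)

From Stdlib Require Import Reals List.
Open Scope R_scope.

Definition phi : R := (1 + sqrt 5) / 2.

Definition pt3 : Type := (R * R * R)%type.
Definition cX (p : pt3) : R := fst (fst p).
Definition cY (p : pt3) : R := snd (fst p).
Definition cZ (p : pt3) : R := snd p.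

Definition theta0 : pt3 := (1/2, 1/phi, 1/(phi^2)).
Definition m0 : pt3 := (0, 1/2, 1/2).

Definition is_int (x : R) : Prop := exists z : Z, x = IZR z.

(* Alphabet {a,b,c}: a <-> planes X = n, b <-> Y = n, c <-> Z = n. *)
Inductive abc : Type := la | lb | lc.

Definition coord (l : abc) (p : pt3) : R :=
  match l with la => cX p | lb => cY p | lc => cZ p end.

Definition on_ray (m theta : pt3) (t : R) : pt3 :=
  (cX m + t * cX theta, cY m + t * cY theta, cZ m + t * cZ theta).

(* f is the cutting word f_theta(m): tau enumerates, in increasing order,
   the parameters t >= 0 at which the half line m + R_+ theta meets a plane
   X = n, Y = n or Z = n (n integer), and f n records which plane. *)
Definition cutting_word (theta m : pt3) (f : nat -> abc) : Prop :=
  exists tau : nat -> R,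
    0 <= tau 0%nat /\
    (forall n, tau n < tau (S n)) /\
    (forall n, is_int (coord (f n) (on_ray m theta (tau n)))) /\
    (forall (t : R) (l : abc), 0 <= t -> is_int (coord l (on_ray m theta t)) ->
       exists n, tau n = t /\ f n = l).

Inductive a7 : Type := a_1 | a_2 | a_3 | a_4 | a_5 | a_6 | a_7.

(* The seven pieces of the face X = 0, for (y,z) in [0,1)^2 (open pieces,
   boundaries excluded). *)
Definition in_piece (i : a7) (y z : R) : Prop :=
  match i with
  | a_7 => y < 4 - 2*phi /\ z < 2*phi - 3
  | a_4 => y > 4 - 2*phi /\ z < 2*phi - 3
  | a_2 => y < 4 - 2*phi /\ 2*phi - 3 < z /\ z < (2 - phi) + y / phi
  | a_1 => y < 4 - 2*phi /\ z > (2 - phi) + y / phi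
  | a_5 => y > 4 - 2*phi /\ 2*phi - 3 < z /\ z < (3 - 2*phi) + y / phi
  | a_3 => y > 4 - 2*phi /\ (3 - 2*phi) + y / phi < z /\ z < (2 - phi) + y / phi
  | a_6 => y > 4 - 2*phi /\ z > (2 - phi) + y / phi
  end.

(* v is the coding word: v_k = a_i iff m + (2k/phi)(1,-1) mod 1, read in the
   (y,z) coordinates of the face X = 0, lies in P_{a_i}. *)
Definition coding_word (m : pt3) (v : nat -> a7) : Prop :=
  forall (k : nat) (i : a7),
    v k = i <->
    in_piece i (frac_part (cY m + 2 * INR k / phi))
               (frac_part (cZ m - 2 * INR k / phi)).

Definition factor {T : Type} (w : nat -> T) (u : list T) : Prop :=
  exists i : nat, u = map (fun j => w (i + j)%nat) (seq 0 (length u)).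

Definition complexity_is {T : Type} (w : nat -> T) (n k : nat) : Prop :=
  exists s : list (list T),
    NoDup s /\ length s = k /\
    (forall u, In u s <-> (length u = n /\ factor w u)).

(* The orbit point [y_k = frac (1/2 + k alpha)], with [alpha = 2 phi - 3 = 2/phi - 1], is the
   [Y]-coordinate of [m + (2k/phi)(1,-1)], whose [Z]-coordinate is [1 - y_k]; on this antidiagonal
   only the pieces [a_1], [a_2], [a_4] occur, cut at [beta = 2 - phi] and [2 beta = 1 - alpha].
   Hence [v] codes the rotation by [alpha] along three intervals, on each of which the rotation
   is a translation, and two factors of length [n] of [v] agree iff no point
   [frac (beta - j alpha)], [frac (2 beta - j alpha)] with [j < n] separates their starting
   orbit points.  Since [1] and [phi] are rationally independent these [2n] points are
   distinct and avoid the orbit, and the orbit is dense, so each of the [2n + 1] cells is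
   visited.  The cutting word is [Phi (v)], made of blocks of length 3; classifying its factors
   by the starting position modulo 3 gives, in the same way, [2n + 3] cells for [n >= 2]. *)

From Stdlib Require Import Reals List Lra Lia ZArith FunctionalExtensionality Classical FinFun.
Import ListNotations.
Open Scope R_scope.

Lemma sqrt5_sqr : sqrt 5 * sqrt 5 = 5.
Proof. apply sqrt_sqrt; lra. Qed.

Lemma phi_sqr : phi * phi = phi + 1.
Proof. unfold phi; pose proof sqrt5_sqr; nra. Qed.

Lemma phi_bounds : 1.618 < phi < 1.6185.
Proof.
  assert (2.236 < sqrt 5 < 2.237) by (pose proof sqrt5_sqr; pose proof (sqrt_pos 5); split; nra).
  unfold phi; lra.
Qed.

Lemma inv_phi : 1 / phi = phi - 1.
Proof.
  pose proof phi_sqr; pose proof phi_bounds.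
  field_simplify; [|lra]. apply Rmult_eq_reg_r with phi; [field_simplify|]; lra.
Qed.

Lemma inv_phi_sqr : 1 / phi ^ 2 = 2 - phi.
Proof.
  pose proof phi_sqr; pose proof phi_bounds.
  apply Rmult_eq_reg_r with (phi ^ 2); [field_simplify; simpl|]; nra.
Qed.

Lemma golden_form_even (p q : Z) :
  (p * p + p * q - q * q = 0)%Z -> Z.even p = true /\ Z.even q = true.
Proof.
  intros H. apply (f_equal Z.even) in H.
  rewrite Z.even_sub, Z.even_add, !Z.even_mul in H.
  destruct (Z.even p), (Z.even q); easy.
Qed.

(* Infinite descent: a solution with [p], [q] even halves to a smaller one. *)
Lemma golden_form_zero (p q : Z) : (p * p + p * q - q * q = 0)%Z -> q = 0%Z.
Proof.
  remember (Z.abs_nat q) as n eqn:Hn. revert p q Hn.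
  induction n as [n IH] using lt_wf_ind. intros p q Hn H.
  destruct (Z.eq_dec q 0) as [|Hq]; [assumption|exfalso].
  destruct (golden_form_even p q H) as [Hp Hq2].
  apply Zeven_bool_iff, Zeven_ex in Hp as [p' ->].
  apply Zeven_bool_iff, Zeven_ex in Hq2 as [q' ->].
  assert (q' = 0%Z) by (apply (IH (Z.abs_nat q')) with p'; lia).
  lia.
Qed.

Lemma phi_irrational (p q : Z) : IZR p + IZR q * phi = 0 -> p = 0%Z /\ q = 0%Z.
Proof.
  intros H.
  assert (Hform : IZR (p * p + p * q - q * q) = 0).
  { rewrite minus_IZR, plus_IZR, !mult_IZR.
    replace (IZR p) with (- (IZR q * phi)) by lra.
    pose proof phi_sqr; nra. }
  apply eq_IZR, golden_form_zero in Hform. subst q.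
  split; [apply eq_IZR; lra | reflexivity].
Qed.

Lemma frac_part_bounds (r : R) : 0 <= frac_part r < 1.
Proof. pose proof (base_fp r); lra. Qed.

Lemma frac_part_spec (r y : R) (z : Z) : 0 <= y < 1 -> r = IZR z + y -> frac_part r = y.
Proof.
  intros Hy ->. unfold frac_part.
  rewrite <- (Int_part_spec (IZR z + y) z) by lra. ring.
Qed.

Lemma frac_part_id (r : R) : 0 <= r < 1 -> frac_part r = r.
Proof. intros Hr. apply frac_part_spec with 0%Z; [assumption | ring]. Qed.

Lemma frac_part_add_int (r : R) (z : Z) : frac_part (r + IZR z) = frac_part r.
Proof.
  apply frac_part_spec with (Int_part r + z)%Z; [apply frac_part_bounds|].
  rewrite plus_IZR, (Rplus_Int_part_frac_part r) at 1. ring.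
Qed.

Lemma frac_part_eq (r r' : R) : frac_part r = frac_part r' -> exists z : Z, r - r' = IZR z.
Proof.
  intros H. exists (Int_part r - Int_part r')%Z.
  rewrite minus_IZR, (Rplus_Int_part_frac_part r), (Rplus_Int_part_frac_part r') at 1.
  lra.
Qed.

Lemma Z_eq_0_of_IZR_bounds (z : Z) : -1 < IZR z < 1 -> z = 0%Z.
Proof. intros [H1 H2]. apply lt_IZR in H1, H2. lia. Qed.

Lemma is_int_add_int (z : Z) (x : R) : is_int (IZR z + x) <-> is_int x.
Proof.
  split; intros [w Hw].
  - exists (w - z)%Z. rewrite minus_IZR. lra.
  - exists (z + w)%Z. rewrite plus_IZR. lra.
Qed.

Definition separates (d y y' : R) : Prop := y < d < y' \/ y' < d < y.

Lemma same_side_iff (c y y' : R) :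
  y <> c -> y' <> c -> ((y < c <-> y' < c) <-> ~ separates c y y').
Proof.
  unfold separates; intros Hy Hy'.
  destruct (Rlt_dec y c), (Rlt_dec y' c); split; intros; try tauto; lra.
Qed.

Definition count_below (D : list R) (y : R) : nat :=
  length (filter (fun d => if Rlt_dec d y then true else false) D).

Lemma count_below_cons (d : R) (D : list R) (y : R) :
  count_below (d :: D) y = ((if Rlt_dec d y then 1 else 0) + count_below D y)%nat.
Proof. unfold count_below; simpl. destruct (Rlt_dec d y); reflexivity. Qed.

Lemma count_below_app (D D' : list R) (y : R) :
  count_below (D ++ D') y = (count_below D y + count_below D' y)%nat.
Proof. unfold count_below. now rewrite filter_app, length_app. Qed.

Lemma count_below_le_length (D : list R) (y : R) : (count_below D y <= length D)%nat.
Proof. apply filter_length_le. Qed.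

Lemma count_below_le (D : list R) (y y' : R) : y <= y' -> (count_below D y <= count_below D y')%nat.
Proof.
  intros Hy. induction D as [|d D IH]; [constructor|].
  rewrite !count_below_cons. destruct (Rlt_dec d y), (Rlt_dec d y'); lra || lia.
Qed.

Lemma count_below_lt (D : list R) (d y y' : R) :
  In d D -> y < d < y' -> (count_below D y < count_below D y')%nat.
Proof.
  intros Hd Hdy. induction D as [|e D IH]; [destruct Hd|].
  rewrite !count_below_cons. destruct Hd as [-> | Hd].
  - pose proof (count_below_le D y y' ltac:(lra)).
    destruct (Rlt_dec d y), (Rlt_dec d y'); lra || lia.
  - specialize (IH Hd). destruct (Rlt_dec e y), (Rlt_dec e y'); lra || lia.
Qed.

Lemma count_below_eq_iff (D : list R) (y y' : R) :
  (forall d, In d D -> d <> y /\ d <> y') ->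
  (count_below D y = count_below D y' <-> forall d, In d D -> ~ separates d y y').
Proof.
  intros Hne. split.
  - intros Heq d Hd [Hsep | Hsep]; apply (count_below_lt D) in Hsep; auto; lia.
  - intros Hnsep. induction D as [|d D IH]; [reflexivity|].
    rewrite !count_below_cons, IH by (intros; apply Hne || apply Hnsep; simpl; auto).
    destruct (Hne d (or_introl eq_refl)). specialize (Hnsep d (or_introl eq_refl)).
    unfold separates in Hnsep. destruct (Rlt_dec d y), (Rlt_dec d y'); try reflexivity; lra.
Qed.

Lemma exists_min_In (D : list R) : D <> [] -> exists d0, In d0 D /\ forall d, In d D -> d0 <= d.
Proof.
  induction D as [|d D IH]; intros HD; [congruence|].
  destruct D as [|e D].
  - exists d. split; [left; reflexivity|]. intros x [<- | []]. lra.
  - destruct IH as [d0 [Hin Hmin]]; [congruence|].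
    destruct (Rle_dec d d0).
    + exists d. split; [left; reflexivity|]. intros x [<- | Hx]; [lra|]. specialize (Hmin x Hx). lra.
    + exists d0. split; [right; assumption|]. intros x [<- | Hx]; [lra | auto].
Qed.

Lemma count_below_cell (D : list R) (lo hi : R) (m : nat) :
  NoDup D -> (forall d, In d D -> lo < d < hi) -> lo < hi -> (m <= length D)%nat ->
  exists a b, lo <= a < b /\ b <= hi /\ forall y, a < y < b -> count_below D y = m.
Proof.
  remember (length D) as n eqn:Hn. revert D lo m Hn.
  induction n as [|n IH]; intros D lo m Hn Hnd Hin Hlo Hm.
  - destruct D; [|discriminate]. exists lo, hi. repeat split; try lra.
    intros. unfold count_below; simpl. lia.
  - destruct (exists_min_In D) as [d0 [Hd0 Hmin]]; [intros ->; discriminate|].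
    apply in_split in Hd0 as [D1 [D2 ->]].
    pose proof (Hin d0 (in_elt d0 D1 D2)) as Hd0.
    destruct m as [|m].
    + exists lo, d0. repeat split; try lra. intros y Hy.
      unfold count_below. rewrite (filter_ext_in _ (fun _ => false)), filter_false; [reflexivity|].
      intros x Hx. specialize (Hmin x Hx). destruct (Rlt_dec x y); [lra | reflexivity].
    + apply NoDup_remove in Hnd as [Hnd Hnotin].
      destruct (IH (D1 ++ D2) d0 m) as [a [b [Hab [Hb Hcount]]]]; auto.
      * rewrite length_app in *. simpl in Hn. lia.
      * intros d Hd. assert (d <> d0) by (intros ->; contradiction).
        assert (Hd' : In d (D1 ++ d0 :: D2))
          by (apply in_app_or in Hd; apply in_or_app; simpl; tauto).
        specialize (Hmin d Hd'). specialize (Hin d Hd'). lra.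
      * lra.
      * lia.
      * exists a, b. repeat split; try lra. intros y Hy.
        specialize (Hcount y Hy). rewrite count_below_app in *. rewrite count_below_cons.
        destruct (Rlt_dec d0 y); [lia | lra].
Qed.

(** * Density of irrational rotations *)

Lemma pigeonhole (N : nat) (g : nat -> nat) :
  (forall i, (i <= N)%nat -> (g i < N)%nat) -> exists i j, (i < j <= N)%nat /\ g i = g j.
Proof.
  intros Hg. apply NNPP. intros Hno.
  assert (Hnd : NoDup (map g (seq 0 (S N)))).
  { apply Injective_map_NoDup_in; [|apply seq_NoDup].
    intros x y Hx Hy E. apply in_seq in Hx, Hy.
    destruct (Nat.lt_trichotomy x y) as [H | [H | H]]; [| assumption |];
      exfalso; apply Hno; [exists x, y | exists y, x]; split; lia || congruence. }
  apply NoDup_incl_length with (l' := seq 0 N) in Hnd.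
  - rewrite length_map, !length_seq in Hnd. lia.
  - intros x Hx. apply in_map_iff in Hx as [i [<- Hi]]. apply in_seq in Hi.
    apply in_seq. specialize (Hg i ltac:(lia)). lia.
Qed.

Lemma exists_nat_mult_between (c d : R) : 0 < d -> 0 <= c -> exists t : nat, c < INR t * d <= c + d.
Proof.
  intros Hd Hc. destruct (archimed (c / d)) as [Hup1 Hup2].
  assert (Hcd : c / d * d = c) by (field; lra).
  assert (0 <= c / d) by (apply Rmult_le_pos; [lra | left; apply Rinv_0_lt_compat; lra]).
  assert (Hpos : (0 <= up (c / d))%Z) by (apply le_IZR; lra).
  exists (Z.to_nat (up (c / d))). rewrite INR_IZR_INZ, Z2Nat.id by exact Hpos.
  split; nra.
Qed.

Lemma frac_progression_hits (x0 delta lo hi : R) :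
  0 <= lo -> hi <= 1 -> 0 < Rabs delta < hi - lo ->
  exists t : nat, lo < frac_part (x0 + INR t * delta) < hi.
Proof.
  intros Hlo Hhi Hdelta.
  pose proof (Rplus_Int_part_frac_part x0) as Hx0. pose proof (frac_part_bounds x0).
  set (u0 := frac_part x0) in *. set (I0 := Int_part x0) in *.
  unfold Rabs in Hdelta. destruct (Rcase_abs delta) as [Hneg | Hpos].
  - destruct (exists_nat_mult_between (u0 - hi + 1) (- delta)) as [t Ht]; [lra | lra |].
    exists t. rewrite (frac_part_spec _ (u0 + INR t * delta + 1) (I0 - 1)); [lra | lra |].
    rewrite minus_IZR. lra.
  - destruct (exists_nat_mult_between (lo + 1 - u0) delta) as [t Ht]; [lra | lra |].
    exists t. rewrite (frac_part_spec _ (u0 + INR t * delta - 1) (I0 + 1)); [lra | lra |].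
    rewrite plus_IZR. lra.
Qed.

Section IrrationalRotation.

Variable a : R.
Hypothesis a_irrational : forall (m : nat) (z : Z), (0 < m)%nat -> INR m * a <> IZR z.

Lemma Int_part_box (x : R) (N : nat) : 0 <= x < INR N -> (0 <= Int_part x < Z.of_nat N)%Z.
Proof.
  intros Hx. pose proof (base_Int_part x). rewrite INR_IZR_INZ in Hx.
  split; [enough (-1 < Int_part x)%Z by lia |]; apply lt_IZR; lra.
Qed.

(* Two of the first [N + 1] points of the orbit of [0] share a box of width [1 / N]. *)
Lemma small_return (eps : R) :
  0 < eps -> exists (m : nat) (z : Z), 0 < Rabs (INR m * a - IZR z) < eps.
Proof.
  intros Heps.
  destruct (exists_nat_mult_between 1 eps) as [N [HN _]]; [lra | lra |].
  assert (HNpos : 0 < INR N) by (pose proof (pos_INR N); nra).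
  set (box := fun i : nat => Int_part (INR N * frac_part (INR i * a))).
  assert (Hbox : forall i, (0 <= box i < Z.of_nat N)%Z).
  { intros i. apply Int_part_box. pose proof (frac_part_bounds (INR i * a)). nra. }
  destruct (pigeonhole N (fun i => Z.to_nat (box i))) as [i [j [Hij Hg]]].
  { intros i _. specialize (Hbox i). lia. }
  assert (Hsame : box i = box j) by (pose proof (Hbox i); pose proof (Hbox j); lia).
  pose proof (base_Int_part (INR N * frac_part (INR i * a))) as Hi.
  pose proof (base_Int_part (INR N * frac_part (INR j * a))) as Hj.
  fold (box i) in Hi. fold (box j) in Hj. rewrite Hsame in Hi.
  exists (j - i)%nat, (Int_part (INR j * a) - Int_part (INR i * a))%Z.
  assert (Hdelta : INR (j - i) * a - IZR (Int_part (INR j * a) - Int_part (INR i * a))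
                   = frac_part (INR j * a) - frac_part (INR i * a)).
  { rewrite minus_INR, minus_IZR by lia.
    pose proof (Rplus_Int_part_frac_part (INR j * a)).
    pose proof (Rplus_Int_part_frac_part (INR i * a)). lra. }
  rewrite Hdelta. split.
  - apply Rabs_pos_lt. rewrite <- Hdelta.
    apply Rminus_eq_contra, a_irrational. lia.
  - apply Rabs_def1; apply Rmult_lt_reg_l with (INR N); nra.
Qed.

Lemma frac_orbit_dense (x0 lo hi : R) :
  0 <= lo < hi -> hi <= 1 -> exists k : nat, lo < frac_part (x0 + INR k * a) < hi.
Proof.
  intros Hlo Hhi.
  destruct (small_return (hi - lo)) as [m [z Hmz]]; [lra|].
  destruct (frac_progression_hits x0 (INR m * a - IZR z) lo hi) as [t Ht]; [lra | lra | lra |].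
  exists (t * m)%nat.
  replace (x0 + INR (t * m) * a) with (x0 + INR t * (INR m * a - IZR z) + IZR (Z.of_nat t * z)).
  - now rewrite frac_part_add_int.
  - rewrite mult_INR, mult_IZR, <- INR_IZR_INZ. ring.
Qed.

End IrrationalRotation.

Definition factor_at {T : Type} (w : nat -> T) (n i : nat) : list T :=
  map (fun j => w (i + j)%nat) (seq 0 n).

Definition same_factor {T : Type} (w : nat -> T) (n i i' : nat) : Prop :=
  forall p, (p < n)%nat -> w (i + p)%nat = w (i' + p)%nat.

Lemma factor_at_eq_iff {T : Type} (w : nat -> T) (n i i' : nat) :
  factor_at w n i = factor_at w n i' <-> same_factor w n i i'.
Proof.
  unfold factor_at, same_factor. split.
  - intros H p Hp. apply (f_equal (fun u => nth_error u p)) in H.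
    rewrite !nth_error_map, nth_error_seq in H.
    destruct (Nat.ltb_spec p n); [|lia]. simpl in H. congruence.
  - intros H. apply map_ext_in. intros p Hp%in_seq. apply H. lia.
Qed.

Lemma same_factor_S {T : Type} (w : nat -> T) (n i i' : nat) :
  same_factor w (S n) i i' <-> same_factor w n i i' /\ w (i + n)%nat = w (i' + n)%nat.
Proof.
  unfold same_factor. split.
  - intros H. split; [intros p Hp|]; apply H; lia.
  - intros [H Hn] p Hp. destruct (Nat.eq_dec p n) as [->|]; [assumption | apply H; lia].
Qed.

Lemma same_factor_add {T : Type} (w : nat -> T) (m n i i' : nat) :
  same_factor w (m + n) i i' <-> same_factor w m i i' /\ same_factor w n (i + m) (i' + m).
Proof.
  unfold same_factor. split.
  - intros H. split; intros p Hp; [apply H; lia|].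
    rewrite <- !Nat.add_assoc. apply H. lia.
  - intros [H1 H2] p Hp. destruct (Nat.lt_ge_cases p m); [apply H1; assumption|].
    replace p with (m + (p - m))%nat by lia. rewrite !Nat.add_assoc. apply H2. lia.
Qed.

Lemma exists_section (key : nat -> nat) (N : nat) :
  (forall m, (m < N)%nat -> exists i, key i = m) -> exists l, map key l = seq 0 N.
Proof.
  induction N as [|N IH]; intros Hsurj; [exists []; reflexivity|].
  destruct IH as [l Hl]; [intros m Hm; apply Hsurj; lia|].
  destruct (Hsurj N) as [i Hi]; [lia|].
  exists (l ++ [i]). rewrite map_app, Hl, seq_S. simpl. now rewrite Hi.
Qed.

Lemma NoDup_map_coarser {A B C : Type} (f : A -> B) (g : A -> C) (l : list A) :
  (forall x y, f x = f y -> g x = g y) -> NoDup (map g l) -> NoDup (map f l).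
Proof.
  intros Hfg. induction l as [|x l IH]; simpl; intros Hnd; constructor.
  - inversion_clear Hnd as [|? ? Hnotin _]. intros [y [Hy Hin]]%in_map_iff.
    apply Hnotin, in_map_iff. exists y. auto.
  - inversion_clear Hnd. auto.
Qed.

Lemma complexity_is_of_key {T : Type} (w : nat -> T) (n N : nat) (key : nat -> nat) :
  (forall i, (key i < N)%nat) -> (forall m, (m < N)%nat -> exists i, key i = m) ->
  (forall i i', same_factor w n i i' <-> key i = key i') ->
  complexity_is w n N.
Proof.
  intros Hlt Hsurj Hkey. destruct (exists_section key N Hsurj) as [l Hl].
  exists (map (factor_at w n) l). split; [|split].
  - apply NoDup_map_coarser with key; [|rewrite Hl; apply seq_NoDup].
    intros i i' E. apply Hkey, factor_at_eq_iff, E.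
  - rewrite <- (length_seq N 0), <- Hl, !length_map. reflexivity.
  - intros u. rewrite in_map_iff. split.
    + intros [i [<- _]]. unfold factor_at. rewrite length_map, length_seq.
      split; [reflexivity | exists i; now rewrite length_map, length_seq].
    + intros [Hlen [i Hi]]. rewrite Hlen in Hi. fold (factor_at w n i) in Hi.
      assert (Hin : In (key i) (map key l)) by (rewrite Hl; apply in_seq; specialize (Hlt i); lia).
      apply in_map_iff in Hin as [i' [Hi' Hin]].
      exists i'. split; [|assumption]. rewrite Hi. apply factor_at_eq_iff, Hkey, Hi'.
Qed.

Lemma strictly_increasing_lt (s : nat -> R) :
  (forall i, s i < s (S i)) -> forall i j, (i < j)%nat -> s i < s j.
Proof.
  intros Hs i j Hij. induction Hij as [|j Hij IH]; [apply Hs|]. specialize (Hs j). lra.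
Qed.

Lemma strictly_increasing_le (s : nat -> R) :
  (forall i, s i < s (S i)) -> forall i j, (i <= j)%nat -> s i <= s j.
Proof.
  intros Hs i j Hij. destruct (Nat.eq_dec i j) as [->|]; [lra|].
  left. apply strictly_increasing_lt; [assumption | lia].
Qed.

Lemma strictly_increasing_inj (s : nat -> R) :
  (forall i, s i < s (S i)) -> forall i j, s i = s j -> i = j.
Proof.
  intros Hs i j E.
  destruct (Nat.lt_trichotomy i j) as [H | [H | H]]; [| assumption |];
    apply (strictly_increasing_lt s Hs) in H; lra.
Qed.

Lemma strictly_increasing_enum_unique (s s' : nat -> R) :
  (forall i, s i < s (S i)) -> (forall i, s' i < s' (S i)) ->
  (forall i, exists j, s i = s' j) -> (forall i, exists j, s' i = s j) ->
  forall i, s i = s' i.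
Proof.
  intros Hs Hs' Hss' Hs's i. induction i as [i IH] using lt_wf_ind.
  destruct (Hss' i) as [j Hj], (Hs's i) as [j' Hj'].
  assert (Hij : (i <= j)%nat).
  { destruct (Nat.lt_ge_cases j i) as [Hlt|]; [exfalso|assumption].
    rewrite <- (IH j Hlt) in Hj. apply (strictly_increasing_inj s Hs) in Hj. lia. }
  assert (Hij' : (i <= j')%nat).
  { destruct (Nat.lt_ge_cases j' i) as [Hlt|]; [exfalso|assumption].
    rewrite (IH j' Hlt) in Hj'. apply (strictly_increasing_inj s' Hs') in Hj'. lia. }
  pose proof (strictly_increasing_le s' Hs' i j Hij).
  pose proof (strictly_increasing_le s Hs i j' Hij').
  lra.
Qed.

Definition alpha : R := 2 * phi - 3.
Definition beta : R := 2 - phi.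

Lemma alpha_beta : alpha + 2 * beta = 1.
Proof. unfold alpha, beta; lra. Qed.

Lemma alpha_bounds : 0.236 < alpha < 0.237.
Proof. unfold alpha; pose proof phi_bounds; lra. Qed.

Lemma beta_bounds : 0.3815 < beta < 0.382.
Proof. unfold beta; pose proof phi_bounds; lra. Qed.

Lemma alpha_irrational (m : nat) (z : Z) : (0 < m)%nat -> INR m * alpha <> IZR z.
Proof.
  intros Hm E.
  assert (Hrel : IZR (- 3 * Z.of_nat m - z) + IZR (2 * Z.of_nat m) * phi = 0).
  { rewrite minus_IZR, !mult_IZR, <- INR_IZR_INZ. unfold alpha in E. lra. }
  apply phi_irrational in Hrel. lia.
Qed.

(* Every special point below is the fractional part of some [gold a b]: the orbit points
   have [a] odd and all the others [a] even, while [b] distinguishes the [sep i]. *)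
Definition gold (a b : Z) : R := IZR a / 2 + IZR b * phi.

Lemma frac_gold_inj (a b a' b' : Z) :
  frac_part (gold a b) = frac_part (gold a' b') -> b = b' /\ Z.even a = Z.even a'.
Proof.
  intros [z Hz]%frac_part_eq.
  assert (Hrel : IZR (a - a' - 2 * z) + IZR (2 * (b - b')) * phi = 0).
  { unfold gold in Hz. repeat rewrite ?mult_IZR, ?minus_IZR. lra. }
  apply phi_irrational in Hrel as [Ha Hb].
  split; [lia|].
  replace a with (a' + 2 * z)%Z by lia.
  rewrite Z.even_add, Z.even_mul. destruct (Z.even a'); reflexivity.
Qed.

Lemma eq_frac_gold (r : R) (a b : Z) : 0 <= r < 1 -> r = gold a b -> r = frac_part (gold a b).
Proof. intros Hr ->. symmetry. now apply frac_part_id. Qed.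

Lemma zero_gold : 0 = frac_part (gold (2 * 0) 0).
Proof. apply eq_frac_gold; [lra | unfold gold; simpl; lra]. Qed.

Lemma beta_gold : beta = frac_part (gold (2 * 2) (-1)).
Proof. pose proof beta_bounds. apply eq_frac_gold; [lra | unfold gold, beta; simpl; lra]. Qed.

Lemma two_beta_gold : 2 * beta = frac_part (gold (2 * 4) (-2)).
Proof. pose proof beta_bounds. apply eq_frac_gold; [lra | unfold gold, beta; simpl; lra]. Qed.

Lemma alpha_gold : alpha = frac_part (gold (2 * (-3)) 2).
Proof. pose proof alpha_bounds. apply eq_frac_gold; [lra | unfold gold, alpha; simpl; lra]. Qed.

Lemma alpha_beta_gold : alpha + beta = frac_part (gold (2 * (-1)) 1).
Proof.
  pose proof alpha_bounds; pose proof beta_bounds.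
  apply eq_frac_gold; [lra | unfold gold, alpha, beta; simpl; lra].
Qed.

Definition orbit (k : nat) : R := frac_part (1 / 2 + INR k * alpha).

Lemma orbit_gold (k : nat) : orbit k = frac_part (gold (1 - 6 * Z.of_nat k) (2 * Z.of_nat k)).
Proof.
  unfold orbit, gold, alpha. f_equal.
  rewrite INR_IZR_INZ. repeat rewrite ?mult_IZR, ?minus_IZR. lra.
Qed.

Lemma orbit_ne_gold (k : nat) (a b : Z) : orbit k <> frac_part (gold (2 * a) b).
Proof.
  rewrite orbit_gold. intros [_ Hparity]%frac_gold_inj.
  rewrite Z.even_sub, !Z.even_mul in Hparity. discriminate.
Qed.

Lemma orbit_bounds (k : nat) : 0 < orbit k < 1.
Proof.
  pose proof (frac_part_bounds (1 / 2 + INR k * alpha)).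
  pose proof (orbit_ne_gold k 0 0). rewrite <- zero_gold in H0.
  unfold orbit in *. lra.
Qed.

Definition cut (i : nat) : R := if Nat.even i then beta else 2 * beta.

Lemma cut_bounds (i : nat) : 0 < cut i < 1.
Proof. pose proof beta_bounds. unfold cut. destruct (Nat.even i); lra. Qed.

Lemma orbit_ne_cut (k i : nat) : orbit k <> cut i.
Proof.
  unfold cut. destruct (Nat.even i); [rewrite beta_gold | rewrite two_beta_gold];
  apply orbit_ne_gold.
Qed.

Lemma orbit_ne_alpha (k : nat) : orbit k <> alpha.
Proof. rewrite alpha_gold. apply orbit_ne_gold. Qed.

Lemma orbit_ne_alpha_beta (k : nat) : orbit k <> alpha + beta.
Proof. rewrite alpha_beta_gold. apply orbit_ne_gold. Qed.

Definition rotate (y : R) : R := if Rlt_dec y (2 * beta) then y + alpha else y + alpha - 1.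

Lemma orbit_S (k : nat) : orbit (S k) = rotate (orbit k).
Proof.
  unfold orbit at 1. rewrite S_INR.
  pose proof (Rplus_Int_part_frac_part (1 / 2 + INR k * alpha)) as Hdecomp.
  pose proof (orbit_bounds k). pose proof alpha_beta. pose proof alpha_bounds.
  fold (orbit k) in Hdecomp.
  unfold rotate. destruct (Rlt_dec (orbit k) (2 * beta)).
  - apply frac_part_spec with (Int_part (1 / 2 + INR k * alpha)); lra.
  - apply frac_part_spec with (Int_part (1 / 2 + INR k * alpha) + 1)%Z; [lra|].
    rewrite plus_IZR. lra.
Qed.

Definition sep (i : nat) : R := frac_part (cut i - INR (Nat.div2 i) * alpha).

Lemma sep_gold (i : nat) : exists a : Z, sep i = frac_part (gold (2 * a) (- Z.of_nat i - 1)).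
Proof.
  destruct (Nat.Even_or_Odd i) as [[j ->] | [j ->]].
  - exists (2 + 3 * Z.of_nat j)%Z. unfold sep, cut.
    rewrite Nat.even_mul, Nat.div2_double. f_equal.
    unfold gold, alpha, beta. rewrite INR_IZR_INZ. rewrite Nat2Z.inj_mul.
    repeat rewrite ?mult_IZR, ?minus_IZR, ?plus_IZR, ?opp_IZR. simpl. lra.
  - exists (4 + 3 * Z.of_nat j)%Z. unfold sep, cut.
    replace (2 * j + 1)%nat with (S (2 * j)) by lia.
    rewrite Nat.even_succ, Nat.odd_mul, Nat.div2_succ_double. f_equal.
    unfold gold, alpha, beta. rewrite INR_IZR_INZ, Nat2Z.inj_succ, Nat2Z.inj_mul.
    repeat rewrite ?mult_IZR, ?minus_IZR, ?plus_IZR, ?opp_IZR, ?succ_IZR. simpl. lra.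
Qed.

Lemma sep_inj (i i' : nat) : sep i = sep i' -> i = i'.
Proof.
  destruct (sep_gold i) as [a ->], (sep_gold i') as [a' ->].
  intros [H _]%frac_gold_inj. lia.
Qed.

Lemma sep_bounds (i : nat) : 0 < sep i < 1.
Proof.
  pose proof (frac_part_bounds (cut i - INR (Nat.div2 i) * alpha)). fold (sep i) in H.
  destruct (Req_dec (sep i) 0) as [E|]; [exfalso|lra].
  destruct (sep_gold i) as [a Ha]. rewrite zero_gold, Ha in E.
  apply frac_gold_inj in E. lia.
Qed.

Lemma orbit_ne_sep (k i : nat) : orbit k <> sep i.
Proof. destruct (sep_gold i) as [a ->]. apply orbit_ne_gold. Qed.

Lemma alpha_ne_sep (i : nat) : alpha <> sep i.
Proof.
  destruct (sep_gold i) as [a ->]. rewrite alpha_gold.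
  intros [H _]%frac_gold_inj. lia.
Qed.

Lemma alpha_beta_ne_sep (i : nat) : alpha + beta <> sep i.
Proof.
  destruct (sep_gold i) as [a ->]. rewrite alpha_beta_gold.
  intros [H _]%frac_gold_inj. lia.
Qed.

(** * The coding word *)

Definition interval3 {A : Type} (c1 c2 : R) (x1 x2 x3 : A) (y : R) : A :=
  if Rlt_dec y c1 then x1 else if Rlt_dec y c2 then x2 else x3.

Lemma interval3_eq_iff {A : Type} (c1 c2 : R) (x1 x2 x3 : A) (y y' : R) :
  c1 < c2 -> x1 <> x2 -> x1 <> x3 -> x2 <> x3 ->
  (interval3 c1 c2 x1 x2 x3 y = interval3 c1 c2 x1 x2 x3 y' <->
   (y < c1 <-> y' < c1) /\ (y < c2 <-> y' < c2)).
Proof.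
  intros Hc H12 H13 H23. unfold interval3.
  destruct (Rlt_dec y c1), (Rlt_dec y c2), (Rlt_dec y' c1), (Rlt_dec y' c2);
    split; intros H; try tauto; try lra; exfalso; (apply H12 + apply H13 + apply H23); congruence.
Qed.

Definition piece_of : R -> a7 := interval3 beta (2 * beta) a_1 a_2 a_4.

Lemma piece_of_eq_iff (y y' : R) :
  piece_of y = piece_of y' <-> (y < beta <-> y' < beta) /\ (y < 2 * beta <-> y' < 2 * beta).
Proof. pose proof beta_bounds. apply interval3_eq_iff; lra || discriminate. Qed.

Definition coding (k : nat) : a7 := piece_of (orbit k).

(* Tests [2j] and [2j + 1] compare the [j]-th orbit points with [beta] and with [2 beta]:
   together they determine letter [j] of [coding]. *)
Definition test_agrees (k k' i : nat) : Prop :=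
  orbit (k + Nat.div2 i) < cut i <-> orbit (k' + Nat.div2 i) < cut i.

Definition tests_agree (k k' L : nat) : Prop := forall i, (i < L)%nat -> test_agrees k k' i.

Lemma tests_agree_S (k k' L : nat) :
  tests_agree k k' (S L) <-> tests_agree k k' L /\ test_agrees k k' L.
Proof.
  unfold tests_agree. split.
  - intros H. split; [intros i Hi|]; apply H; lia.
  - intros [H HL] i Hi. destruct (Nat.eq_dec i L) as [->|]; [assumption | apply H; lia].
Qed.

Lemma tests_agree_le (k k' L L' : nat) : (L' <= L)%nat -> tests_agree k k' L -> tests_agree k k' L'.
Proof. intros HL H i Hi. apply H. lia. Qed.

Lemma coding_eq_iff_tests (k k' j : nat) :
  coding (k + j) = coding (k' + j) <-> test_agrees k k' (2 * j) /\ test_agrees k k' (S (2 * j)).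
Proof.
  unfold coding, test_agrees, cut.
  rewrite Nat.div2_double, Nat.div2_succ_double, Nat.even_succ, Nat.odd_mul, Nat.even_mul.
  apply piece_of_eq_iff.
Qed.

Lemma same_coding_iff_tests (k k' n : nat) :
  same_factor coding n k k' <-> tests_agree k k' (2 * n).
Proof.
  induction n as [|n IH]; [split; intros _ p Hp; lia|].
  rewrite same_factor_S, IH, coding_eq_iff_tests.
  replace (2 * S n)%nat with (S (S (2 * n))) by lia.
  rewrite !tests_agree_S. tauto.
Qed.

(* The letter [a_4] marks exactly the steps where the rotation wraps around. *)
Lemma orbit_add_wraps (k k' j : nat) :
  same_factor coding j k k' ->
  exists N : Z, orbit (k + j) = orbit k + INR j * alpha - IZR N /\
                orbit (k' + j) = orbit k' + INR j * alpha - IZR N.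
Proof.
  induction j as [|j IH]; intros Hsame.
  - exists 0%Z. rewrite !Nat.add_0_r. simpl. split; ring.
  - apply same_factor_S in Hsame as [Hsame Hj].
    destruct (IH Hsame) as [N [HN HN']].
    unfold coding in Hj. apply piece_of_eq_iff in Hj as [_ Hwrap].
    rewrite !Nat.add_succ_r, !orbit_S, S_INR. unfold rotate.
    destruct (Rlt_dec (orbit (k + j)) (2 * beta)), (Rlt_dec (orbit (k' + j)) (2 * beta)); try tauto.
    + exists N. lra.
    + exists (N + 1)%Z. rewrite plus_IZR. lra.
Qed.

Lemma separates_after (k k' j : nat) (c : R) :
  same_factor coding j k k' -> 0 < c < 1 ->
  (separates (frac_part (c - INR j * alpha)) (orbit k) (orbit k') <->
   separates c (orbit (k + j)) (orbit (k' + j))).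
Proof.
  intros Hsame Hc. destruct (orbit_add_wraps k k' j Hsame) as [N [HN HN']].
  pose proof (orbit_bounds k). pose proof (orbit_bounds k').
  pose proof (orbit_bounds (k + j)). pose proof (orbit_bounds (k' + j)).
  pose proof (Rplus_Int_part_frac_part (c - INR j * alpha)) as Hdecomp.
  set (M := Int_part (c - INR j * alpha)) in *.
  set (d := frac_part (c - INR j * alpha)) in *.
  assert (Hshift : d + INR j * alpha - IZR N = c - IZR (M + N)) by (rewrite plus_IZR; lra).
  unfold separates. split; intros Hsep.
  - assert (HMN : (M + N)%Z = 0%Z) by (apply Z_eq_0_of_IZR_bounds; lra).
    rewrite HMN in Hshift. simpl in Hshift. lra.
  - assert (Hd : d = c - INR j * alpha + IZR N).
    { apply frac_part_spec with (- N)%Z; [lra | rewrite opp_IZR; ring]. }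
    lra.
Qed.

Lemma test_agrees_iff (k k' L : nat) :
  tests_agree k k' L -> (test_agrees k k' L <-> ~ separates (sep L) (orbit k) (orbit k')).
Proof.
  intros Hbelow.
  assert (Hsame : same_factor coding (Nat.div2 L) k k').
  { apply same_coding_iff_tests, tests_agree_le with L; [|assumption].
    pose proof (Nat.div2_odd L). lia. }
  unfold sep. rewrite separates_after by (assumption || apply cut_bounds).
  apply same_side_iff; apply orbit_ne_cut.
Qed.

Lemma tests_agree_iff (k k' L : nat) :
  tests_agree k k' L <-> forall i, (i < L)%nat -> ~ separates (sep i) (orbit k) (orbit k').
Proof.
  induction L as [|L IH]; [split; intros _ i Hi; lia|].
  split.
  - intros Htests. apply tests_agree_S in Htests as [Hbelow HL].
    intros i Hi. destruct (Nat.eq_dec i L) as [->|].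
    + now apply test_agrees_iff.
    + apply IH; [assumption | lia].
  - intros Hsep. assert (Hbelow : tests_agree k k' L) by (apply IH; intros i Hi; apply Hsep; lia).
    apply tests_agree_S. split; [assumption|].
    apply test_agrees_iff; [assumption | apply Hsep; lia].
Qed.

Definition seps (L : nat) : list R := map sep (seq 0 L).

Lemma In_seps (L : nat) (d : R) : In d (seps L) <-> exists i, (i < L)%nat /\ d = sep i.
Proof.
  unfold seps. rewrite in_map_iff. split.
  - intros [i [<- Hi%in_seq]]. exists i. split; [lia | reflexivity].
  - intros [i [Hi ->]]. exists i. split; [reflexivity | apply in_seq; lia].
Qed.

Lemma seps_length (L : nat) : length (seps L) = L.
Proof. unfold seps. now rewrite length_map, length_seq. Qed.

Definition admissible (D : list R) : Prop :=
  NoDup D /\ forall d, In d D -> 0 < d < 1 /\ forall k, d <> orbit k.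

Lemma seps_admissible (L : nat) : admissible (seps L).
Proof.
  split; [apply Injective_map_NoDup; [exact sep_inj | apply seq_NoDup]|].
  intros d [i [_ ->]]%In_seps. split; [apply sep_bounds|].
  intros k E. exact (orbit_ne_sep k i (eq_sym E)).
Qed.

Lemma admissible_count_eq_iff (D : list R) (k k' : nat) : admissible D ->
  (count_below D (orbit k) = count_below D (orbit k') <->
   forall d, In d D -> ~ separates d (orbit k) (orbit k')).
Proof. intros [_ HD]. apply count_below_eq_iff. intros d Hd. split; apply HD, Hd. Qed.

Lemma admissible_count_surj (s : nat) (D : list R) (m : nat) :
  admissible D -> (m <= length D)%nat -> exists k, count_below D (orbit (s + k)) = m.
Proof.
  intros [Hnd HD] Hm.
  destruct (count_below_cell D 0 1 m) as [a [b [Hab [Hb Hcell]]]];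
    [assumption | apply HD | lra | assumption |].
  destruct (frac_orbit_dense alpha alpha_irrational (1 / 2 + INR s * alpha) a b)
    as [k Hk]; [lra | lra |].
  exists k. apply Hcell. unfold orbit. rewrite plus_INR.
  replace (1 / 2 + (INR s + INR k) * alpha) with (1 / 2 + INR s * alpha + INR k * alpha) by ring.
  exact Hk.
Qed.

Lemma tests_agree_iff_seps (k k' L : nat) :
  tests_agree k k' L <-> forall d, In d (seps L) -> ~ separates d (orbit k) (orbit k').
Proof.
  rewrite tests_agree_iff. split.
  - intros H d [i [Hi ->]]%In_seps. auto.
  - intros H i Hi. apply H, In_seps. eauto.
Qed.

Lemma tests_agree_iff_count (k k' L : nat) :
  tests_agree k k' L <-> count_below (seps L) (orbit k) = count_below (seps L) (orbit k').
Proof.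
  rewrite tests_agree_iff_seps, admissible_count_eq_iff by apply seps_admissible. reflexivity.
Qed.

Lemma two_div_phi (k : nat) : 2 * INR k / phi = INR k * alpha + INR k.
Proof.
  pose proof phi_bounds. unfold Rdiv. rewrite Rmult_assoc, (Rmult_comm (INR k)), <- Rmult_assoc.
  replace (2 * / phi) with (2 * (1 / phi)) by (field; lra).
  rewrite inv_phi. unfold alpha. ring.
Qed.

Lemma frac_Y_coding (k : nat) : frac_part (cY m0 + 2 * INR k / phi) = orbit k.
Proof.
  unfold cY, m0. simpl. rewrite two_div_phi.
  replace (1 / 2 + (INR k * alpha + INR k)) with (1 / 2 + INR k * alpha + IZR (Z.of_nat k))
    by (rewrite <- INR_IZR_INZ; ring).
  apply frac_part_add_int.
Qed.

Lemma frac_Z_coding (k : nat) : frac_part (cZ m0 - 2 * INR k / phi) = 1 - orbit k.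
Proof.
  unfold cZ, m0. simpl. rewrite two_div_phi. pose proof (orbit_bounds k).
  pose proof (Rplus_Int_part_frac_part (1 / 2 + INR k * alpha)). fold (orbit k) in H0.
  apply frac_part_spec with (- Int_part (1 / 2 + INR k * alpha) - Z.of_nat k)%Z; [lra|].
  rewrite minus_IZR, opp_IZR, <- INR_IZR_INZ. lra.
Qed.

Lemma div_phi (y : R) : y / phi = y * (phi - 1).
Proof. pose proof phi_bounds. rewrite <- inv_phi. field. lra. Qed.

(* On the antidiagonal [z = 1 - y], the sloped sides of the pieces cross at [y = beta]
   and [y = 2 beta]. *)
Lemma upper_side_on_antidiagonal (y : R) : (2 - phi) + y / phi - (1 - y) = (y - beta) * phi.
Proof. rewrite div_phi. unfold beta. pose proof phi_sqr. lra. Qed.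

Lemma lower_side_on_antidiagonal (y : R) : (1 - y) - ((3 - 2 * phi) + y / phi) = (2 * beta - y) * phi.
Proof. rewrite div_phi. unfold beta. pose proof phi_sqr. lra. Qed.

Lemma piece_of_in_piece (y : R) (i : a7) :
  0 < y < 1 -> y <> beta -> y <> 2 * beta -> (piece_of y = i <-> in_piece i y (1 - y)).
Proof.
  intros Hy Hb H2b. pose proof beta_bounds. pose proof phi_bounds.
  pose proof (upper_side_on_antidiagonal y) as U. pose proof (lower_side_on_antidiagonal y) as L.
  assert (E1 : 4 - 2 * phi = 2 * beta) by (unfold beta; ring).
  assert (E2 : 2 * phi - 3 = 1 - 2 * beta) by (unfold beta; ring).
  unfold piece_of, interval3.
  destruct (Rlt_dec y beta) as [h1|h1]; [|destruct (Rlt_dec y (2 * beta)) as [h2|h2]];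
  [ assert ((2 - phi) + y / phi < 1 - y) by nra; assert ((3 - 2 * phi) + y / phi < 1 - y) by nra
  | assert (1 - y < (2 - phi) + y / phi) by nra; assert ((3 - 2 * phi) + y / phi < 1 - y) by nra
  | assert (1 - y < (2 - phi) + y / phi) by nra; assert (1 - y < (3 - 2 * phi) + y / phi) by nra ];
  destruct i; simpl; rewrite ?E1, ?E2; split; intros H';
    try discriminate; try reflexivity; try (exfalso; lra); repeat split; lra.
Qed.

Lemma orbit_in_piece_iff (k : nat) (i : a7) :
  piece_of (orbit k) = i <->
  in_piece i (frac_part (cY m0 + 2 * INR k / phi)) (frac_part (cZ m0 - 2 * INR k / phi)).
Proof.
  rewrite frac_Y_coding, frac_Z_coding.
  apply piece_of_in_piece; [apply orbit_bounds | exact (orbit_ne_cut k 0) | exact (orbit_ne_cut k 1)].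
Qed.

Lemma coding_is_coding_word : coding_word m0 coding.
Proof. intros k i. apply orbit_in_piece_iff. Qed.

Lemma coding_word_unique (v : nat -> a7) : coding_word m0 v -> v = coding.
Proof.
  intros Hv. extensionality k. symmetry. apply orbit_in_piece_iff, Hv. reflexivity.
Qed.

Lemma coding_complexity (n : nat) : complexity_is coding n (2 * n + 1).
Proof.
  apply complexity_is_of_key with (key := fun k => count_below (seps (2 * n)) (orbit k)).
  - intros k. pose proof (count_below_le_length (seps (2 * n)) (orbit k)).
    rewrite seps_length in H. lia.
  - intros m Hm. apply (admissible_count_surj 0); [apply seps_admissible | rewrite seps_length; lia].
  - intros k k'. rewrite same_coding_iff_tests. apply tests_agree_iff_count.
Qed.

(** * The cutting word *)

Definition Phi (c : a7) : list abc :=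
  match c with
  | a_1 => [la; lc; lb] | a_2 => [la; lb; lc] | a_3 => [la; lb; lc; lb] | a_4 => [la; lb; lb]
  | a_5 => [la; lb; lb; lc] | a_6 => [la; lc; lb; lb] | a_7 => [la; lb]
  end.

(* Only [a_1], [a_2] and [a_4] occur in [coding], whose images under [Phi] all have
   length 3: the [k]-th block of [Phi (coding)] occupies positions [3k], [3k+1], [3k+2]. *)
Definition cutting (i : nat) : abc := nth (i mod 3) (Phi (coding (i / 3))) la.

Lemma div_mod_3 (x : nat) : (x = 3 * (x / 3) + x mod 3 /\ x mod 3 < 3)%nat.
Proof. split; [apply Nat.div_mod_eq | apply Nat.mod_upper_bound; lia]. Qed.

Lemma block_div_mod (k r : nat) : (r < 3)%nat -> ((3 * k + r) / 3 = k /\ (3 * k + r) mod 3 = r)%nat.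
Proof.
  intros Hr. split; symmetry; [apply Nat.div_unique with r | apply Nat.mod_unique with k]; lia.
Qed.

Lemma block_decomp (i : nat) : exists q r, (r < 3)%nat /\ i = (3 * q + r)%nat.
Proof.
  exists (i / 3)%nat, (i mod 3)%nat.
  split; [apply Nat.mod_upper_bound; lia | apply Nat.div_mod_eq].
Qed.

Lemma cutting_block (k r : nat) : (r < 3)%nat -> cutting (3 * k + r) = nth r (Phi (coding k)) la.
Proof. intros Hr. unfold cutting. now destruct (block_div_mod k r Hr) as [-> ->]. Qed.

Lemma coding_cases (k : nat) : coding k = a_1 \/ coding k = a_2 \/ coding k = a_4.
Proof.
  unfold coding, piece_of, interval3.
  destruct (Rlt_dec (orbit k) beta); [|destruct (Rlt_dec (orbit k) (2 * beta))]; auto.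
Qed.

Lemma cutting_0 (k : nat) : cutting (3 * k) = la.
Proof.
  rewrite <- (Nat.add_0_r (3 * k)), cutting_block by lia.
  destruct (coding_cases k) as [-> | [-> | ->]]; reflexivity.
Qed.

Lemma cutting_1_ne_a (k : nat) : cutting (3 * k + 1) <> la.
Proof. rewrite cutting_block by lia. destruct (coding_cases k) as [-> | [-> | ->]]; discriminate. Qed.

Lemma cutting_2_ne_a (k : nat) : cutting (3 * k + 2) <> la.
Proof. rewrite cutting_block by lia. destruct (coding_cases k) as [-> | [-> | ->]]; discriminate. Qed.

Lemma cutting_1_c_iff (k : nat) : cutting (3 * k + 1) = lc <-> coding k = a_1.
Proof.
  rewrite cutting_block by lia.
  destruct (coding_cases k) as [-> | [-> | ->]]; split; easy.
Qed.

Lemma cutting_2_c_iff (k : nat) : cutting (3 * k + 2) = lc <-> coding k = a_2.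
Proof.
  rewrite cutting_block by lia.
  destruct (coding_cases k) as [-> | [-> | ->]]; split; easy.
Qed.

Lemma cutting_class (i : nat) : cutting i = la <-> (i mod 3 = 0)%nat.
Proof.
  rewrite (Nat.div_mod_eq i 3) at 1.
  pose proof (Nat.mod_upper_bound i 3 ltac:(lia)).
  destruct (i mod 3) as [|[|[|r]]]; [| | |lia]; rewrite ?Nat.add_0_r.
  - split; [reflexivity | intros _; apply cutting_0].
  - split; [intros H'; exfalso; exact (cutting_1_ne_a _ H') | discriminate].
  - split; [intros H'; exfalso; exact (cutting_2_ne_a _ H') | discriminate].
Qed.

Lemma b_c_eq_iff (x x' : abc) : x <> la -> x' <> la -> (x = x' <-> (x = lc <-> x' = lc)).
Proof. destruct x, x'; intuition discriminate. Qed.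

Lemma coding_a1_iff (k : nat) : coding k = a_1 <-> orbit k < beta.
Proof.
  unfold coding, piece_of, interval3.
  destruct (Rlt_dec (orbit k) beta); [|destruct (Rlt_dec (orbit k) (2 * beta))];
    split; easy.
Qed.

Lemma coding_a2_iff (k : nat) : coding k = a_2 <-> beta < orbit k < 2 * beta.
Proof.
  pose proof (orbit_ne_cut k 0) as Hb. cbn in Hb.
  unfold coding, piece_of, interval3.
  destruct (Rlt_dec (orbit k) beta); [|destruct (Rlt_dec (orbit k) (2 * beta))];
    split; intros; try discriminate; try reflexivity; lra.
Qed.

(* The number of positions [p < n] with [p mod 3 <> 0]: in a factor starting at a block
   boundary, these are the letters that carry a test. *)
Definition nb_tests (n : nat) : nat := (n - (n + 2) / 3)%nat.

Lemma nb_tests_block (q r : nat) : (r < 3)%nat -> nb_tests (3 * q + r) = (2 * q + (r - 1))%nat.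
Proof.
  intros Hr. unfold nb_tests.
  pose proof (div_mod_3 (3 * q + r + 2)). lia.
Qed.

Lemma cutting_1_eq_iff (k k' q : nat) :
  cutting (3 * (k + q) + 1) = cutting (3 * (k' + q) + 1) <-> test_agrees k k' (2 * q).
Proof.
  rewrite b_c_eq_iff, !cutting_1_c_iff, !coding_a1_iff by apply cutting_1_ne_a.
  unfold test_agrees, cut. rewrite Nat.div2_double, Nat.even_mul. reflexivity.
Qed.

Lemma cutting_2_eq_iff (k k' q : nat) :
  test_agrees k k' (2 * q) ->
  (cutting (3 * (k + q) + 2) = cutting (3 * (k' + q) + 2) <-> test_agrees k k' (S (2 * q))).
Proof.
  rewrite b_c_eq_iff, !cutting_2_c_iff, !coding_a2_iff by apply cutting_2_ne_a.
  unfold test_agrees, cut.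
  rewrite Nat.div2_double, Nat.div2_succ_double, Nat.even_succ, Nat.odd_mul, Nat.even_mul. cbn.
  pose proof (orbit_ne_cut (k + q) 0). pose proof (orbit_ne_cut (k' + q) 0). cbn in *.
  destruct (Rlt_dec (orbit (k + q)) beta), (Rlt_dec (orbit (k' + q)) beta),
    (Rlt_dec (orbit (k + q)) (2 * beta)), (Rlt_dec (orbit (k' + q)) (2 * beta));
    pose proof beta_bounds; intros; split; intros; tauto || lra.
Qed.

Lemma same_cutting_from_block (k k' n : nat) :
  same_factor cutting n (3 * k) (3 * k') <-> tests_agree k k' (nb_tests n).
Proof.
  induction n as [|n IH]; [split; intros _ p Hp; cbn in Hp; lia|].
  rewrite same_factor_S, IH.
  destruct (block_decomp n) as [q [r [Hr ->]]].
  replace (3 * k + (3 * q + r))%nat with (3 * (k + q) + r)%nat by lia.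
  replace (3 * k' + (3 * q + r))%nat with (3 * (k' + q) + r)%nat by lia.
  rewrite nb_tests_block by assumption.
  destruct r as [|[|[|r]]]; [| | |lia].
  - replace (S (3 * q + 0)) with (3 * q + 1)%nat by lia. rewrite nb_tests_block by lia.
    rewrite !Nat.add_0_r, !cutting_0. tauto.
  - replace (S (3 * q + 1)) with (3 * q + 2)%nat by lia. rewrite nb_tests_block by lia.
    replace (2 * q + (2 - 1))%nat with (S (2 * q + (1 - 1))) by lia.
    rewrite tests_agree_S, Nat.sub_diag, Nat.add_0_r, cutting_1_eq_iff. reflexivity.
  - replace (S (3 * q + 2)) with (3 * S q + 0)%nat by lia. rewrite nb_tests_block by lia.
    replace (2 * S q + (0 - 1))%nat with (S (2 * q + (2 - 1))) by lia.
    rewrite tests_agree_S. replace (2 * q + (2 - 1))%nat with (S (2 * q)) by lia.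
    split; intros [Hbelow Hlast]; split; try assumption;
      [apply cutting_2_eq_iff | apply (cutting_2_eq_iff k k' q)]; try assumption;
      apply Hbelow; lia.
Qed.

(* The rotation maps [[0, beta)], [[beta, 2 beta)], [[2 beta, 1)] onto [[alpha, alpha + beta)],
   [[alpha + beta, 1)], [[0, alpha)], so [coding k] can be read off from [orbit (S k)]. *)
Definition piece_before : R -> a7 := interval3 alpha (alpha + beta) a_4 a_1 a_2.

Lemma coding_piece_before (k : nat) : coding k = piece_before (orbit (S k)).
Proof.
  pose proof (orbit_bounds k). pose proof (orbit_ne_cut k 0) as Hb. cbn in Hb.
  pose proof alpha_beta. pose proof alpha_bounds. pose proof beta_bounds.
  unfold coding, piece_of, piece_before, interval3. rewrite orbit_S. unfold rotate.
  destruct (Rlt_dec (orbit k) beta); [|destruct (Rlt_dec (orbit k) (2 * beta))];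
    destruct (Rlt_dec (orbit k) (2 * beta)); try lra;
    repeat (destruct (Rlt_dec _ _)); reflexivity || lra.
Qed.

Lemma same_coding_iff_next (k k' : nat) :
  coding k = coding k' <->
  ~ separates alpha (orbit (S k)) (orbit (S k')) /\
  ~ separates (alpha + beta) (orbit (S k)) (orbit (S k')).
Proof.
  pose proof alpha_bounds; pose proof beta_bounds.
  rewrite !coding_piece_before. unfold piece_before.
  rewrite interval3_eq_iff by (lra || discriminate).
  rewrite !same_side_iff by (apply orbit_ne_alpha || apply orbit_ne_alpha_beta). reflexivity.
Qed.

Lemma coding_a2_iff_next (k : nat) : coding k = a_2 <-> ~ orbit (S k) < alpha + beta.
Proof.
  pose proof alpha_bounds; pose proof beta_bounds.
  rewrite coding_piece_before. unfold piece_before, interval3.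
  destruct (Rlt_dec (orbit (S k)) alpha), (Rlt_dec (orbit (S k)) (alpha + beta));
    split; intros; try discriminate; try reflexivity; lra.
Qed.

Lemma same_cutting_pair (k k' : nat) :
  same_factor cutting 2 (3 * k + 1) (3 * k' + 1) <-> coding k = coding k'.
Proof.
  rewrite !same_factor_S, !Nat.add_0_r.
  replace (3 * k + 1 + 1)%nat with (3 * k + 2)%nat by lia.
  replace (3 * k' + 1 + 1)%nat with (3 * k' + 2)%nat by lia.
  rewrite (b_c_eq_iff (cutting (3 * k + 1))), (b_c_eq_iff (cutting (3 * k + 2)))
    by (apply cutting_1_ne_a || apply cutting_2_ne_a).
  rewrite !cutting_1_c_iff, !cutting_2_c_iff.
  assert (same_factor cutting 0 (3 * k + 1) (3 * k' + 1)) by (intros p Hp; lia).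
  destruct (coding_cases k) as [-> | [-> | ->]], (coding_cases k') as [-> | [-> | ->]];
    intuition discriminate.
Qed.

Definition seps_from_1 (n : nat) : list R := alpha :: alpha + beta :: seps (nb_tests (n - 2)).
Definition seps_from_2 (n : nat) : list R := alpha + beta :: seps (nb_tests (n - 1)).

Lemma seps_from_1_admissible (n : nat) : admissible (seps_from_1 n).
Proof.
  pose proof alpha_bounds; pose proof beta_bounds.
  destruct (seps_admissible (nb_tests (n - 2))) as [Hnd HD].
  split.
  - constructor; [|constructor; [|assumption]].
    + intros [E | [i [_ E]]%In_seps]; [lra | exact (alpha_ne_sep i E)].
    + intros [i [_ E]]%In_seps. exact (alpha_beta_ne_sep i E).
  - intros d [<- | [<- | Hd]]; [| | now apply HD].
    + split; [lra|]. intros k E. exact (orbit_ne_alpha k (eq_sym E)).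
    + split; [lra|]. intros k E. exact (orbit_ne_alpha_beta k (eq_sym E)).
Qed.

Lemma seps_from_2_admissible (n : nat) : admissible (seps_from_2 n).
Proof.
  pose proof alpha_bounds; pose proof beta_bounds.
  destruct (seps_admissible (nb_tests (n - 1))) as [Hnd HD].
  split.
  - constructor; [|assumption]. intros [i [_ E]]%In_seps. exact (alpha_beta_ne_sep i E).
  - intros d [<- | Hd]; [| now apply HD].
    split; [lra|]. intros k E. exact (orbit_ne_alpha_beta k (eq_sym E)).
Qed.

Lemma same_cutting_from_1 (k k' n : nat) : (2 <= n)%nat ->
  same_factor cutting n (3 * k + 1) (3 * k' + 1) <->
  count_below (seps_from_1 n) (orbit (S k)) = count_below (seps_from_1 n) (orbit (S k')).
Proof.
  intros Hn. replace n with (2 + (n - 2))%nat at 1 by lia.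
  rewrite same_factor_add, same_cutting_pair, same_coding_iff_next.
  replace (3 * k + 1 + 2)%nat with (3 * S k)%nat by lia.
  replace (3 * k' + 1 + 2)%nat with (3 * S k')%nat by lia.
  rewrite same_cutting_from_block, tests_agree_iff_seps, admissible_count_eq_iff
    by apply seps_from_1_admissible.
  unfold seps_from_1. simpl. split.
  - intros [[Ha Hab] Hrest] d [<- | [<- | Hd]]; auto.
  - intros H. repeat split; [apply H; auto.. |]. intros d Hd. apply H. auto.
Qed.

Lemma same_cutting_from_2 (k k' n : nat) : (1 <= n)%nat ->
  same_factor cutting n (3 * k + 2) (3 * k' + 2) <->
  count_below (seps_from_2 n) (orbit (S k)) = count_below (seps_from_2 n) (orbit (S k')).
Proof.
  intros Hn. replace n with (1 + (n - 1))%nat at 1 by lia.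
  rewrite same_factor_add.
  replace (3 * k + 2 + 1)%nat with (3 * S k)%nat by lia.
  replace (3 * k' + 2 + 1)%nat with (3 * S k')%nat by lia.
  rewrite same_cutting_from_block, tests_agree_iff_seps, admissible_count_eq_iff
    by apply seps_from_2_admissible.
  assert (Hfirst : same_factor cutting 1 (3 * k + 2) (3 * k' + 2) <->
                   ~ separates (alpha + beta) (orbit (S k)) (orbit (S k'))).
  { rewrite same_factor_S, !Nat.add_0_r, b_c_eq_iff, !cutting_2_c_iff, !coding_a2_iff_next
      by apply cutting_2_ne_a.
    rewrite <- same_side_iff by apply orbit_ne_alpha_beta.
    split; [intros [_ H] | intros H; split; [intros p Hp; lia|]]; tauto. }
  rewrite Hfirst. unfold seps_from_2. simpl. split.
  - intros [Hab Hrest] d [<- | Hd]; auto.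
  - intros H. split; [apply H; auto|]. intros d Hd. apply H. auto.
Qed.

Lemma seps_from_1_length (n : nat) : length (seps_from_1 n) = (nb_tests (n - 2) + 2)%nat.
Proof. unfold seps_from_1. simpl. rewrite seps_length. lia. Qed.

Lemma seps_from_2_length (n : nat) : length (seps_from_2 n) = (nb_tests (n - 1) + 1)%nat.
Proof. unfold seps_from_2. simpl. rewrite seps_length. lia. Qed.

Lemma nb_tests_sum (n : nat) :
  (2 <= n)%nat -> (nb_tests n + nb_tests (n - 1) + nb_tests (n - 2) = 2 * n - 3)%nat.
Proof.
  intros Hn. unfold nb_tests.
  pose proof (div_mod_3 (n + 2)). pose proof (div_mod_3 (n - 1 + 2)). pose proof (div_mod_3 (n - 2 + 2)).
  lia.
Qed.

Lemma same_cutting_same_class (n i i' : nat) :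
  (2 <= n)%nat -> same_factor cutting n i i' -> (i mod 3 = i' mod 3)%nat.
Proof.
  intros Hn Hsame.
  pose proof (Hsame 0%nat ltac:(lia)) as H0. pose proof (Hsame 1%nat ltac:(lia)) as H1.
  rewrite !Nat.add_0_r in H0.
  assert (E0 : (i mod 3 = 0 <-> i' mod 3 = 0)%nat) by (rewrite <- !cutting_class, H0; reflexivity).
  assert (E1 : ((i + 1) mod 3 = 0 <-> (i' + 1) mod 3 = 0)%nat)
    by (rewrite <- !cutting_class, H1; reflexivity).
  pose proof (div_mod_3 i). pose proof (div_mod_3 i').
  pose proof (div_mod_3 (i + 1)). pose proof (div_mod_3 (i' + 1)).
  lia.
Qed.

(* Factors of length [n] are ranked class by class: first by the position of [orbit k]
   among [seps (nb_tests n)] for starts [3k], then by the position of [orbit (S k)]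
   among [seps_from_1 n] resp. [seps_from_2 n] for starts [3k+1] resp. [3k+2]. *)
Definition block_key (n k r : nat) : nat :=
  match r with
  | 0 => count_below (seps (nb_tests n)) (orbit k)
  | 1 => S (nb_tests n) + count_below (seps_from_1 n) (orbit (S k))
  | _ => S (nb_tests n) + S (length (seps_from_1 n)) + count_below (seps_from_2 n) (orbit (S k))
  end%nat.

Definition cutting_key (n i : nat) : nat := block_key n (i / 3) (i mod 3).

Lemma cutting_key_block (n k r : nat) : (r < 3)%nat -> cutting_key n (3 * k + r) = block_key n k r.
Proof. intros Hr. unfold cutting_key. now destruct (block_div_mod k r Hr) as [-> ->]. Qed.

Lemma block_key_bounds (n k : nat) : (2 <= n)%nat ->
  (block_key n k 0 <= nb_tests n /\
   S (nb_tests n) <= block_key n k 1 <= nb_tests n + nb_tests (n - 2) + 3 /\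
   nb_tests n + nb_tests (n - 2) + 4 <= block_key n k 2 < 2 * n + 3)%nat.
Proof.
  intros Hn. unfold block_key. pose proof (nb_tests_sum n Hn).
  pose proof (count_below_le_length (seps (nb_tests n)) (orbit k)).
  pose proof (count_below_le_length (seps_from_1 n) (orbit (S k))).
  pose proof (count_below_le_length (seps_from_2 n) (orbit (S k))).
  rewrite seps_length, seps_from_1_length, seps_from_2_length in *. lia.
Qed.

Lemma cutting_key_lt (n i : nat) : (2 <= n)%nat -> (cutting_key n i < 2 * n + 3)%nat.
Proof.
  intros Hn. destruct (block_decomp i) as [k [r [Hr ->]]].
  rewrite cutting_key_block by assumption.
  pose proof (block_key_bounds n k Hn).
  destruct r as [|[|[|r]]]; lia.
Qed.

Lemma cutting_key_surj (n m : nat) :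
  (2 <= n)%nat -> (m < 2 * n + 3)%nat -> exists i, cutting_key n i = m.
Proof.
  intros Hn Hm. pose proof (nb_tests_sum n Hn).
  destruct (Nat.le_gt_cases m (nb_tests n)).
  - destruct (admissible_count_surj 0 (seps (nb_tests n)) m) as [k Hk];
      [apply seps_admissible | rewrite seps_length; lia |].
    exists (3 * k + 0)%nat. now rewrite cutting_key_block by lia.
  - destruct (Nat.le_gt_cases m (nb_tests n + nb_tests (n - 2) + 3)).
    + destruct (admissible_count_surj 1 (seps_from_1 n) (m - S (nb_tests n))) as [k Hk];
        [apply seps_from_1_admissible | rewrite seps_from_1_length; lia |].
      exists (3 * k + 1)%nat. rewrite cutting_key_block by lia. unfold block_key. simpl in Hk. lia.
    + destruct (admissible_count_surj 1 (seps_from_2 n) (m - (nb_tests n + nb_tests (n - 2) + 4)))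
        as [k Hk]; [apply seps_from_2_admissible | rewrite seps_from_2_length; lia |].
      exists (3 * k + 2)%nat. rewrite cutting_key_block by lia. unfold block_key.
      rewrite seps_from_1_length. simpl in Hk. lia.
Qed.

Lemma same_cutting_iff_key (n i i' : nat) : (2 <= n)%nat ->
  same_factor cutting n i i' <-> cutting_key n i = cutting_key n i'.
Proof.
  intros Hn.
  destruct (block_decomp i) as [k [r [Hr ->]]], (block_decomp i') as [k' [r' [Hr' ->]]].
  rewrite !cutting_key_block by assumption.
  destruct (Nat.eq_dec r r') as [<- | Hrr'].
  - destruct r as [|[|[|r]]]; [| | |lia]; unfold block_key.
    + rewrite !Nat.add_0_r, same_cutting_from_block. apply tests_agree_iff_count.
    + rewrite same_cutting_from_1 by assumption. lia.
    + rewrite same_cutting_from_2 by lia. lia.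
  - split.
    + intros Hsame. apply same_cutting_same_class in Hsame; [|assumption].
      rewrite (proj2 (block_div_mod k r Hr)), (proj2 (block_div_mod k' r' Hr')) in Hsame.
      contradiction.
    + pose proof (block_key_bounds n k Hn). pose proof (block_key_bounds n k' Hn).
      destruct r as [|[|[|r]]], r' as [|[|[|r']]]; lia.
Qed.

Lemma cutting_complexity (n : nat) : (2 <= n)%nat -> complexity_is cutting n (2 * n + 3).
Proof.
  intros Hn. apply complexity_is_of_key with (key := cutting_key n).
  - intros i. now apply cutting_key_lt.
  - intros m Hm. now apply cutting_key_surj.
  - intros i i'. now apply same_cutting_iff_key.
Qed.

(** * Hitting times of the ray *)

(* Write [t = 2k + s] with [0 <= s < 2] and [y = orbit k]; up to integers, the ray has
   coordinates [X = s / 2], [Y = y + s (phi - 1)] and [Z = s (2 - phi) - y] (see [ray_local]),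
   so in block [k] it meets [X = k] at [s = 0], the planes [Y = n] at [s = (j - y) phi] and the
   planes [Z = n] at [s = (j + y) (phi + 1)]. *)
Definition block_time (r : nat) (y : R) : R :=
  match r with
  | 0%nat => 0
  | 1%nat => if Rlt_dec y beta then y * (phi + 1) else (1 - y) * phi
  | _ => if Rlt_dec y beta then (1 - y) * phi
         else if Rlt_dec y (2 * beta) then y * (phi + 1) else (2 - y) * phi
  end.

Definition hit_time (i : nat) : R := 2 * INR (i / 3) + block_time (i mod 3) (orbit (i / 3)).

Lemma hit_time_block (k r : nat) :
  (r < 3)%nat -> hit_time (3 * k + r) = 2 * INR k + block_time r (orbit k).
Proof. intros Hr. unfold hit_time. now destruct (block_div_mod k r Hr) as [-> ->]. Qed.

Lemma block_time_increasing (y : R) :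
  0 < y < 1 -> y <> beta -> y <> 2 * beta ->
  0 < block_time 1 y < block_time 2 y /\ block_time 2 y < 2.
Proof.
  intros Hy Hb H2b. pose proof phi_sqr. pose proof phi_bounds. pose proof beta_bounds.
  assert (E1 : beta * (2 * phi + 1) = phi) by (unfold beta; lra).
  assert (E2 : 2 * beta * (phi + 1) = 2) by (unfold beta; lra).
  simpl. destruct (Rlt_dec y beta); [|destruct (Rlt_dec y (2 * beta))].
  - assert (0 < (beta - y) * (2 * phi + 1)) by (apply Rmult_lt_0_compat; lra).
    split; [split|]; nra.
  - assert (0 < (y - beta) * (2 * phi + 1)) by (apply Rmult_lt_0_compat; lra).
    assert (0 < (2 * beta - y) * (phi + 1)) by (apply Rmult_lt_0_compat; lra).
    split; [split|]; nra.
  - assert (0 < (y - 2 * beta) * phi) by (apply Rmult_lt_0_compat; lra).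
    split; [split|]; nra.
Qed.

Lemma hit_time_increasing (i : nat) : hit_time i < hit_time (S i).
Proof.
  destruct (block_decomp i) as [k [r [Hr ->]]].
  destruct (block_time_increasing (orbit k)) as [[H1 H12] H2];
    [apply orbit_bounds | exact (orbit_ne_cut k 0) | exact (orbit_ne_cut k 1) |].
  assert (H0 : block_time 0 (orbit k) = 0) by reflexivity.
  destruct r as [|[|[|r]]]; [| | |lia].
  - replace (S (3 * k + 0)) with (3 * k + 1)%nat by lia. rewrite !hit_time_block by lia. lra.
  - replace (S (3 * k + 1)) with (3 * k + 2)%nat by lia. rewrite !hit_time_block by lia. lra.
  - replace (S (3 * k + 2)) with (3 * S k + 0)%nat by lia. rewrite !hit_time_block by lia.
    assert (block_time 0 (orbit (S k)) = 0) by reflexivity. rewrite S_INR. lra.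
Qed.

Lemma hit_time_nonneg (i : nat) : 0 <= hit_time i.
Proof.
  assert (H0 : hit_time 0 = 0) by (unfold hit_time; simpl; ring).
  rewrite <- H0. apply strictly_increasing_le; [exact hit_time_increasing | lia].
Qed.

Definition local_coord (l : abc) (y s : R) : R :=
  match l with la => s / 2 | lb => y + s * (phi - 1) | lc => s * (2 - phi) - y end.

Lemma ray_local (k : nat) (s : R) (l : abc) :
  exists z : Z, coord l (on_ray m0 theta0 (2 * INR k + s)) = IZR z + local_coord l (orbit k) s.
Proof.
  pose proof (Rplus_Int_part_frac_part (1 / 2 + INR k * alpha)) as Hdecomp. fold (orbit k) in Hdecomp.
  set (I := Int_part (1 / 2 + INR k * alpha)) in Hdecomp.
  pose proof phi_bounds.
  unfold coord, on_ray, m0, theta0, cX, cY, cZ. cbn [fst snd]. rewrite inv_phi_sqr, inv_phi.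
  rewrite INR_IZR_INZ in *. unfold alpha in Hdecomp.
  destruct l; simpl.
  - exists (Z.of_nat k). field.
  - exists (I + Z.of_nat k)%Z. rewrite plus_IZR. lra.
  - exists (1 + Z.of_nat k - I)%Z. rewrite minus_IZR, plus_IZR. lra.
Qed.

Lemma ray_is_int_iff (k : nat) (s : R) (l : abc) :
  is_int (coord l (on_ray m0 theta0 (2 * INR k + s))) <-> is_int (local_coord l (orbit k) s).
Proof. destruct (ray_local k s l) as [z ->]. apply is_int_add_int. Qed.

Lemma block_time_on_plane (y : R) (r : nat) : (r < 3)%nat ->
  is_int (local_coord (nth r (Phi (piece_of y)) la) y (block_time r y)).
Proof.
  intros Hr. pose proof phi_sqr.
  assert (Hc : y * (phi + 1) * (2 - phi) - y = IZR 0).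
  { replace (y * (phi + 1) * (2 - phi)) with (y * (phi + 2 - phi * phi)) by ring.
    rewrite phi_sqr. simpl. ring. }
  assert (Hb : forall j, y + (IZR j - y) * phi * (phi - 1) = IZR j).
  { intros j. replace ((IZR j - y) * phi * (phi - 1)) with ((IZR j - y) * (phi * phi - phi)) by ring.
    rewrite phi_sqr. ring. }
  unfold piece_of, interval3, block_time.
  destruct (Rlt_dec y beta); [|destruct (Rlt_dec y (2 * beta))];
    destruct r as [|[|[|r]]]; try lia; simpl;
    solve [exists 0%Z; lra | exists 0%Z; exact Hc
          | exists 1%Z; exact (Hb 1%Z) | exists 2%Z; exact (Hb 2%Z)].
Qed.

Lemma piece_of_cases (y : R) :
  (y < beta /\ piece_of y = a_1) \/ (beta <= y < 2 * beta /\ piece_of y = a_2) \/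
  (2 * beta <= y /\ piece_of y = a_4).
Proof.
  unfold piece_of, interval3.
  destruct (Rlt_dec y beta); [|destruct (Rlt_dec y (2 * beta))]; [left | right; left | right; right];
    split; reflexivity || lra.
Qed.

Lemma X_hit_block_time (y s : R) : 0 <= s < 2 -> is_int (local_coord la y s) ->
  exists r, (r < 3)%nat /\ block_time r y = s /\ nth r (Phi (piece_of y)) la = la.
Proof.
  intros Hs [z Hz]. simpl in Hz.
  assert (z = 0%Z) by (apply Z_eq_0_of_IZR_bounds; lra). subst z.
  exists 0%nat. split; [lia | split; [simpl; lra|]].
  destruct (piece_of_cases y) as [[_ ->] | [[_ ->] | [_ ->]]]; reflexivity.
Qed.

Lemma Y_hit_block_time (y s : R) :
  0 < y < 1 -> y <> beta -> 0 <= s < 2 -> is_int (local_coord lb y s) ->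
  exists r, (r < 3)%nat /\ block_time r y = s /\ nth r (Phi (piece_of y)) la = lb.
Proof.
  intros Hy Hb Hs [z Hz]. simpl in Hz. pose proof phi_sqr. pose proof phi_bounds.
  assert (Hsz : s = (IZR z - y) * phi).
  { replace s with (s * (phi * phi - phi)) by (rewrite phi_sqr; ring). rewrite <- Hz. ring. }
  assert (Hz12 : z = 1%Z \/ z = 2%Z).
  { assert (0 < IZR z < 3) by nra. destruct H1 as [H1 H2]. apply lt_IZR in H1, H2. lia. }
  unfold block_time.
  destruct Hz12 as [-> | ->]; destruct (piece_of_cases y) as [[Hp ->] | [[Hp ->] | [Hp ->]]].
  - exists 2%nat. destruct (Rlt_dec y beta); [|lra]. repeat split; [lia | lra].
  - exists 1%nat. destruct (Rlt_dec y beta); [lra|]. repeat split; [lia | lra].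
  - exists 1%nat. destruct (Rlt_dec y beta); [lra|]. repeat split; [lia | lra].
  - exfalso. unfold beta in Hp. nra.
  - exfalso. unfold beta in Hp. nra.
  - exists 2%nat. destruct (Rlt_dec y beta); [lra|]. destruct (Rlt_dec y (2 * beta)); [lra|].
    repeat split; [lia | lra].
Qed.

Lemma Z_hit_block_time (y s : R) :
  0 < y < 1 -> y <> beta -> y <> 2 * beta -> 0 <= s < 2 -> is_int (local_coord lc y s) ->
  exists r, (r < 3)%nat /\ block_time r y = s /\ nth r (Phi (piece_of y)) la = lc.
Proof.
  intros Hy Hb H2b Hs [z Hz]. simpl in Hz. pose proof phi_sqr. pose proof phi_bounds.
  assert (z = 0%Z) by (apply Z_eq_0_of_IZR_bounds; nra). subst z.
  assert (Hsy : s = y * (phi + 1)).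
  { replace y with (s * (2 - phi)) by (simpl in Hz; lra).
    replace (s * (2 - phi) * (phi + 1)) with (s * (phi + 2 - phi * phi)) by ring.
    rewrite phi_sqr. ring. }
  unfold block_time.
  destruct (piece_of_cases y) as [[Hp ->] | [[Hp ->] | [Hp ->]]].
  - exists 1%nat. destruct (Rlt_dec y beta); [|lra]. repeat split; [lia | lra].
  - exists 2%nat. destruct (Rlt_dec y beta); [lra|]. destruct (Rlt_dec y (2 * beta)); [|lra].
    repeat split; [lia | lra].
  - exfalso. unfold beta in Hp, H2b. nra.
Qed.

Lemma exists_block (t : R) : 0 <= t -> exists (k : nat) (s : R), 0 <= s < 2 /\ t = 2 * INR k + s.
Proof.
  intros Ht. pose proof (base_Int_part (t / 2)) as [H1 H2].
  assert (HK : (0 <= Int_part (t / 2))%Z)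
    by (enough (-1 < Int_part (t / 2))%Z by lia; apply lt_IZR; lra).
  exists (Z.to_nat (Int_part (t / 2))), (t - 2 * IZR (Int_part (t / 2))).
  rewrite INR_IZR_INZ, Z2Nat.id by exact HK. split; [split|]; lra.
Qed.

Lemma hit_time_on_plane (i : nat) : is_int (coord (cutting i) (on_ray m0 theta0 (hit_time i))).
Proof.
  destruct (block_decomp i) as [k [r [Hr ->]]].
  rewrite hit_time_block, cutting_block, ray_is_int_iff by assumption.
  now apply block_time_on_plane.
Qed.

Lemma plane_hit_is_hit_time (t : R) (l : abc) :
  0 <= t -> is_int (coord l (on_ray m0 theta0 t)) -> exists i, hit_time i = t /\ cutting i = l.
Proof.
  intros Ht Hl. destruct (exists_block t Ht) as [k [s [Hs ->]]].
  apply ray_is_int_iff in Hl.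
  pose proof (orbit_bounds k). pose proof (orbit_ne_cut k 0). pose proof (orbit_ne_cut k 1).
  assert (Hr : exists r, (r < 3)%nat /\ block_time r (orbit k) = s /\ nth r (Phi (coding k)) la = l).
  { destruct l; [apply X_hit_block_time | apply Y_hit_block_time | apply Z_hit_block_time];
      assumption. }
  destruct Hr as [r [Hr [Htime Hletter]]].
  exists (3 * k + r)%nat. rewrite hit_time_block, cutting_block by assumption. split; congruence.
Qed.

Lemma cutting_is_cutting_word : cutting_word theta0 m0 cutting.
Proof.
  exists hit_time. repeat split.
  - apply hit_time_nonneg.
  - apply hit_time_increasing.
  - apply hit_time_on_plane.
  - intros t l Ht Hl. destruct (plane_hit_is_hit_time t l Ht Hl) as [i [Hi Hli]]. eauto.
Qed.

Lemma cutting_word_unique (f : nat -> abc) : cutting_word theta0 m0 f -> f = cutting.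
Proof.
  intros [tau [Htau0 [Hinc [Hhit Hall]]]].
  assert (Hpos : forall n, 0 <= tau n).
  { intros n. pose proof (strictly_increasing_le tau Hinc 0 n ltac:(lia)). lra. }
  assert (Htimes : forall n, tau n = hit_time n).
  { apply strictly_increasing_enum_unique; [assumption | apply hit_time_increasing | |].
    - intros n. destruct (plane_hit_is_hit_time _ _ (Hpos n) (Hhit n)) as [i [Hi _]]. eauto.
    - intros n. destruct (Hall _ _ (hit_time_nonneg n) (hit_time_on_plane n)) as [m [Hm _]]. eauto. }
  extensionality n.
  destruct (plane_hit_is_hit_time _ _ (Hpos n) (Hhit n)) as [i [Hi Hli]].
  rewrite Htimes in Hi. apply (strictly_increasing_inj _ hit_time_increasing) in Hi. congruence.
Qed.

Theorem proposition3 :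
  ((exists v : nat -> a7, coding_word m0 v) /\
   (forall v : nat -> a7, coding_word m0 v ->
      forall n : nat, complexity_is v n (2 * n + 1))) /\
  ((exists f : nat -> abc, cutting_word theta0 m0 f) /\
   (forall f : nat -> abc, cutting_word theta0 m0 f ->
      forall n : nat, (2 <= n)%nat -> complexity_is f n (2 * n + 3))).
Proof.
  split; split.
  - exists coding. exact coding_is_coding_word.
  - intros v Hv n. rewrite (coding_word_unique v Hv). apply coding_complexity.
  - exists cutting. exact cutting_is_cutting_word.
  - intros f Hf n Hn. rewrite (cutting_word_unique f Hf). now apply cutting_complexity.
Qed.
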